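(* Let $n\geq 3$ and $q=p^h$. If $c$ is a codeword of minimum weight of $C(PG(n,q))^\perp$, then $supp(c)$ is contained in a plane of $PG(n,q)$.
   Context: $C(PG(n,q))$ is the $\mathbb{F}_p$-span of the incidence vectors of the hyperplanes of $PG(n,q)$, with coordinates indexed by points. $C^\perp$ is its dual with respect to the standard scalar product over $\mathbb{F}_p$. $supp(c)$ is the set of points at which $c$ is nonzero. *)

From HB Require Import structures.
From mathcomp Require Import all_boot all_order all_algebra all_field.
Set Implicit Arguments. Unset Strict Implicit. Unset Printing Implicit Defensive.
Import GRing.Theory.
Local Open Scope ring_scope.

(* Projective subspaces of PG(n,q), q = #|F|, of vector dimension k:
   canonical row-space representatives of rank k in F^(n+1). *)
Definition PGsub (F : finFieldType) (n k : nat) : finType :=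
  {A : 'M[F]_(n.+1) | (\rank A == k) && (<<A>>%MS == A)}.

Definition PGpoint (F : finFieldType) (n : nat) := PGsub F n 1.
Definition PGhyperplane (F : finFieldType) (n : nat) := PGsub F n n.
Definition PGplane (F : finFieldType) (n : nat) := PGsub F n 3.

Definition incident (F : finFieldType) (n k : nat) (x : PGpoint F n) (S : PGsub F n k) : bool :=
  (val x <= val S)%MS.

Definition word (F : finFieldType) (n p : nat) := PGpoint F n -> 'F_p.

Definition incvec (F : finFieldType) (n p : nat) (H : PGhyperplane F n) : word F n p :=
  fun x => (incident x H)%:R.

Definition inC (F : finFieldType) (n p : nat) (c : word F n p) : Prop :=
  exists a : PGhyperplane F n -> 'F_p,
    forall x, c x = \sum_(H : PGhyperplane F n) a H * incvec p H x.

Definition dotw (F : finFieldType) (n p : nat) (c d : word F n p) : 'F_p :=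
  \sum_(x : PGpoint F n) c x * d x.

Definition inCperp (F : finFieldType) (n p : nat) (c : word F n p) : Prop :=
  forall d : word F n p, inC d -> dotw c d = 0.

Definition supp (F : finFieldType) (n p : nat) (c : word F n p) : {set PGpoint F n} :=
  [set x | c x != 0].

Definition wt (F : finFieldType) (n p : nat) (c : word F n p) : nat := #|supp c|.

Definition min_weight_Cperp (F : finFieldType) (n p : nat) (c : word F n p) : Prop :=
  [/\ inCperp c, supp c != set0 &
      forall d : word F n p, inCperp d -> supp d != set0 -> (wt c <= wt d)%N].

From HB Require Import structures.
From mathcomp Require Import all_boot all_order all_algebra all_field.
From mathcomp Require Import zify.
Set Implicit Arguments. Unset Strict Implicit. Unset Printing Implicit Defensive.
Import GRing.Theory.
Local Open Scope ring_scope.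

(* As q = 0 in F_p, such a word also sums to 0 over all
      points, and the difference of two intersecting lines is a nonzero
      word of weight at most 2q, which bounds the minimum weight.
   3. Projection (key lemma): for a hole P (a point outside the support of
      c), summing c over the lines through P gives a word of C^perp
      supported on the projection of supp c. If P lies on a secant line,
      two support points collapse, so by minimality every line joining P
      to a support point must be secant as well.
   4. Counting: if a hole lies on a secant line L, every plane through L
      and a further support point carries at least q support points off L,
      so two such planes would exceed the weight bound 2q; if no hole lies
      on a secant line, two secant lines through a support point already
      carry 2q + 1 support points. Either way supp c lies in a plane. *)

Section ProjectiveGeometry.
Variables (F : finFieldType) (n : nat).
Local Notation point := (PGpoint F n).
Local Notation vector := ('rV[F]_n.+1).

Lemma PGsub_rank k (S : PGsub F n k) : \rank (val S) = k.
Proof. by case: S => A /= /andP[/eqP]. Qed.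

Lemma PGsub_genmx k (S : PGsub F n k) : <<val S>>%MS = val S.
Proof. by case: S => A /= /andP[_ /eqP]. Qed.

Lemma eqmx_of_rank m1 m2 (A : 'M[F]_(m1, n.+1)) (B : 'M[F]_(m2, n.+1)) :
  (A <= B)%MS -> (\rank B <= \rank A)%N -> (A :=: B)%MS.
Proof.
by move=> sAB r; apply/eqmxP; rewrite -(mxrank_leqif_eq sAB).2 eqn_leq r mxrankS.
Qed.

Lemma PGsub_eq k (S T : PGsub F n k) : (val S <= val T)%MS -> S = T.
Proof.
move=> le; apply: val_inj; rewrite -PGsub_genmx -[val T]PGsub_genmx.
by apply: eq_genmx; apply: eqmx_of_rank => //; rewrite !PGsub_rank.
Qed.

Definition span_proof k m (A : 'M[F]_(m, n.+1)) (rA : \rank A = k) :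
  (\rank <<A>>%MS == k) && (<<<<A>>%MS>>%MS == <<A>>%MS).
Proof. by rewrite genmxE rA genmx_id !eqxx. Qed.

Definition span k m (A : 'M[F]_(m, n.+1)) (rA : \rank A = k) : PGsub F n k :=
  exist _ <<A>>%MS (span_proof rA).

Lemma spanE k m (A : 'M[F]_(m, n.+1)) (rA : \rank A = k) : (val (span rA) :=: A)%MS.
Proof. exact: genmxE. Qed.

(* The point spanned by A when A has rank 1, and the default d otherwise;
   a total variant of [span] used to define maps into the point set. *)
Definition point_of (d : point) m (A : 'M[F]_(m, n.+1)) : point :=
  odflt d (insub <<A>>%MS).

Lemma point_ofE d m (A : 'M[F]_(m, n.+1)) :
  \rank A = 1%N -> (val (point_of d A) :=: A)%MS.
Proof.
move=> rA; rewrite /point_of; case: insubP => [u _ -> /=|]; first exact: genmxE.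
by rewrite (span_proof rA).
Qed.

Lemma point_of_eq d m (A : 'M[F]_(m, n.+1)) (x : point) :
  \rank A = 1%N -> (A <= val x)%MS -> point_of d A = x.
Proof. by move=> rA le; apply: PGsub_eq; rewrite point_ofE. Qed.

Lemma point_of_scale d m (A : 'M[F]_(m, n.+1)) a :
  a != 0 -> point_of d (a *: A) = point_of d A.
Proof. by move=> a0; rewrite /point_of (eq_genmx (eqmx_scale _ a0)). Qed.

Lemma point_of_inj d (w1 w2 : vector) : w1 != 0 -> w2 != 0 ->
  point_of d w1 = point_of d w2 -> exists a, w1 = a *: w2.
Proof.
move=> n1 n2 e; apply/sub_rVP.
have r1 : \rank w1 = 1%N by rewrite rank_rV n1.
have r2 : \rank w2 = 1%N by rewrite rank_rV n2.
by rewrite -(point_ofE d r1) e (point_ofE d r2).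
Qed.

Lemma point_rank (x : point) : \rank (val x) = 1%N.
Proof. exact: PGsub_rank. Qed.

Lemma point_vector (x : point) : exists2 w : vector, w != 0 & (w :=: val x)%MS.
Proof.
have : ~~ (val x <= (0 : 'M[F]_(n.+1)))%MS.
  by apply/negP => /mxrankS; rewrite mxrank0 point_rank.
case/row_subPn => i hi; have w0 : row i (val x) != 0.
  by apply: contraNneq hi => ->; rewrite sub0mx.
exists (row i (val x)) => //; apply: eqmx_of_rank; first exact: row_sub.
by rewrite point_rank rank_rV w0.
Qed.

Lemma rank_add_point m1 m2 (A : 'M[F]_(m1, n.+1)) (B : 'M[F]_(m2, n.+1)) :
  \rank B = 1%N -> ~~ (B <= A)%MS -> \rank (A + B)%MS = (\rank A).+1.
Proof.
move=> rB nBA; have c0 : \rank (A :&: B)%MS = 0%N.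
  have : (\rank (A :&: B)%MS <= 1)%N by rewrite -rB mxrankS ?capmxSr.
  rewrite leq_eqVlt ltnS leqn0 => /orP[/eqP e|/eqP //].
  have := mxrank_leqif_sup (capmxSr A B); rewrite e rB => -[_].
  rewrite eqxx => /esym sBc; case/negP: nBA; exact: submx_trans sBc (capmxSl _ _).
by have := mxrank_sum_cap A B; rewrite c0 addn0 rB addn1.
Qed.

Lemma rank_cap m1 m2 (A : 'M[F]_(m1, n.+1)) (B : 'M[F]_(m2, n.+1)) :
  \rank (A :&: B)%MS = (\rank A + \rank B - \rank (A + B)%MS)%N.
Proof. by rewrite -mxrank_sum_cap addKn. Qed.

Definition points m (U : 'M[F]_(m, n.+1)) : {set point} :=
  [set x : point | (val x <= U)%MS].

Lemma points_eqmx m1 m2 (A : 'M[F]_(m1, n.+1)) (B : 'M[F]_(m2, n.+1)) :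
  (A :=: B)%MS -> points A = points B.
Proof. by move=> e; apply/setP => x; rewrite !inE e. Qed.

Lemma pointsI m1 m2 (A : 'M[F]_(m1, n.+1)) (B : 'M[F]_(m2, n.+1)) :
  points A :&: points B = points (A :&: B)%MS.
Proof. by apply/setP => x; rewrite !inE sub_capmx. Qed.

Lemma ex_point_notin m1 m2 (U : 'M[F]_(m1, n.+1)) (A : 'M[F]_(m2, n.+1)) :
  ~~ (U <= A)%MS -> exists x : point, (val x <= U)%MS && ~~ (val x <= A)%MS.
Proof.
case/row_subPn => i hi; have nz : row i U != 0.
  by apply: contraNneq hi => ->; rewrite sub0mx.
have r1 : \rank (row i U) = 1%N by rewrite rank_rV nz.
by exists (span r1); rewrite /= !genmxE hi andbT row_sub.
Qed.

Lemma ex_point_in m (U : 'M[F]_(m, n.+1)) : (0 < \rank U)%N ->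
  exists x : point, (val x <= U)%MS.
Proof.
move=> rU; have : ~~ (U <= (0 : 'M[F]_(n.+1)))%MS.
  by apply/negP => /mxrankS; rewrite mxrank0 leqNgt rU.
by case/ex_point_notin => x /andP[h _]; exists x.
Qed.

Lemma ex_point_outside m (A : 'M[F]_(m, n.+1)) : (\rank A < n.+1)%N ->
  exists x : point, ~~ (val x <= A)%MS.
Proof.
move=> rA; have : ~~ ((1%:M : 'M[F]_(n.+1)) <= A)%MS.
  by apply/negP => /mxrankS; rewrite mxrank1 leqNgt rA.
by case/ex_point_notin => x /andP[_ h]; exists x.
Qed.

Lemma point_rank1_uniq m (U : 'M[F]_(m, n.+1)) (x y : point) :
  \rank U = 1%N -> (val x <= U)%MS -> (val y <= U)%MS -> x = y.
Proof.
move=> rU hx hy; apply: PGsub_eq; apply: submx_trans hx _.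
by rewrite (eqmx_of_rank hy) // rU point_rank.
Qed.

Lemma card_points_rank1 m (U : 'M[F]_(m, n.+1)) : \rank U = 1%N -> #|points U| = 1%N.
Proof.
move=> rU; have [x xU] : exists x : point, (val x <= U)%MS by apply: ex_point_in; rewrite rU.
suff -> : points U = [set x] by rewrite cards1.
apply/setP => y; rewrite !inE.
by apply/idP/eqP => [yU|->//]; apply: (point_rank1_uniq rU).
Qed.

Lemma point_neq_sub (x y : point) : x != y -> ~~ (val y <= val x)%MS.
Proof. by apply: contra => /PGsub_eq ->. Qed.

Lemma rank_line (x y : point) : x != y -> \rank (val x + val y)%MS = 2%N.
Proof. by move=> ne; rewrite rank_add_point ?point_rank ?point_neq_sub. Qed.

Lemma line_eq (x y : point) m (M : 'M[F]_(m, n.+1)) : x != y ->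
  (val x <= M)%MS -> (val y <= M)%MS -> (\rank M <= 2)%N -> (val x + val y :=: M)%MS.
Proof.
move=> xy xM yM rM; apply: eqmx_of_rank; first by rewrite addsmx_sub xM.
by rewrite rank_line.
Qed.

Lemma exchange_point m (A : 'M[F]_(m, n.+1)) (x y : point) :
  ~~ (val y <= A)%MS ->
  (val x <= A + val y)%MS = (val x <= A)%MS || (val y <= A + val x)%MS.
Proof.
move=> nyA; have [xA|xA] /= := boolP (val x <= A)%MS.
  by rewrite (submx_trans xA) ?addsmxSl.
have rx := rank_add_point (point_rank x) xA.
have ry := rank_add_point (point_rank y) nyA.
apply/idP/idP => h.
  have e : (A + val x :=: A + val y)%MS.
    by apply: eqmx_of_rank; [rewrite addsmx_sub addsmxSl h | rewrite rx ry].
  by rewrite e addsmxSr.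
have e : (A + val y :=: A + val x)%MS.
  by apply: eqmx_of_rank; [rewrite addsmx_sub addsmxSl h | rewrite rx ry].
by rewrite e addsmxSr.
Qed.

Lemma ex_plane_through m (L : 'M[F]_(m, n.+1)) : (1 < n)%N -> \rank L = 2%N ->
  exists pi : PGplane F n, (L <= val pi)%MS.
Proof.
move=> n1 rL; have [w wL] : exists w : point, ~~ (val w <= L)%MS.
  by apply: ex_point_outside; rewrite rL ltnS.
have r3 : \rank (L + val w)%MS = 3%N by rewrite rank_add_point ?point_rank // rL.
by exists (span r3); rewrite spanE addsmxSl.
Qed.

Lemma independent2 (u v : vector) a b : u != 0 -> ~~ (v <= u)%MS ->
  a *: u + b *: v = 0 -> a = 0 /\ b = 0.
Proof.
move=> u0 vu e; have b0 : b = 0.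
  apply/eqP; apply: contraNT vu => b0; apply/sub_rVP; exists (- (a / b)).
  have ev : b *: v = - (a *: u) by apply/eqP; rewrite -addr_eq0 addrC e.
  by rewrite -[v](scalerK b0) ev scalerN scalerA mulrC scaleNr.
split => //; move: e; rewrite b0 scale0r addr0 => /eqP.
by rewrite scalemx_eq0 (negPf u0) orbF => /eqP.
Qed.

Section LineParametrization.
(* The points of the line spanned by independent vectors u and v are the
   points <v + t u> (t in F) together with <u>. *)
Variables (d : point) (u v : vector).
Hypotheses (u0 : u != 0) (vu : ~~ (v <= u)%MS).

Definition line_vector (o : option F) : vector :=
  if o is Some t then v + t *: u else u.

Lemma coord_eq a b a' b' : a *: u + b *: v = a' *: u + b' *: v -> a = a' /\ b = b'.
Proof.
move=> h; have := @independent2 u v (a - a') (b - b') u0 vu.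
rewrite !scalerBl addrACA -opprD h subrr => /(_ erefl) [/eqP + /eqP].
by rewrite !subr_eq0 => /eqP -> /eqP ->.
Qed.

Lemma line_vector_neq0 o : line_vector o != 0.
Proof.
case: o => [t|//] /=; apply/eqP => e; have := @independent2 u v t 1 u0 vu.
by rewrite scale1r addrC e => /(_ erefl) [_ /eqP]; rewrite oner_eq0.
Qed.

Lemma line_vector_inj : injective (fun o => point_of d (line_vector o)).
Proof.
move=> o1 o2 /(point_of_inj (line_vector_neq0 _) (line_vector_neq0 _)) [l].
case: o1 o2 => [t|] [s|] //= e.
- have [-> <-] : t = l * s /\ (1 = l :> F).
    by apply: coord_eq; rewrite scale1r addrC e scalerDr scalerA addrC.
  by rewrite mul1r.
- have [_ /eqP] : t = l /\ (1 = 0 :> F).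
    by apply: coord_eq; rewrite scale1r addrC e scale0r addr0.
  by rewrite oner_eq0.
- have [+ l0] : (1 = l * s :> F) /\ (0 = l :> F).
    by apply: coord_eq; rewrite scale1r scale0r addr0 {1}e scalerDr scalerA addrC.
  by rewrite -l0 mul0r => /eqP; rewrite oner_eq0.
Qed.

(* Every point of the line is hit: write a spanning vector as a1 u + a2 v
   and rescale by a2 when a2 != 0. *)
Lemma points_line_param :
  points (u + v)%MS = [set point_of d (line_vector o) | o in [set: option F]].
Proof.
apply/setP => x; rewrite inE; apply/idP/imsetP => [xU|[o _ ->]]; last first.
  rewrite point_ofE ?rank_rV ?line_vector_neq0 //.
  by case: o => [t|] /=; rewrite ?addmx_sub ?scalemx_sub ?addsmxSl ?addsmxSr.
have [w w0 ew] := point_vector x.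
have /sub_addsmxP[[a1 a2] /= ew2] : (w <= u + v)%MS by rewrite ew.
rewrite (mx11_scalar a1) (mx11_scalar a2) !mul_scalar_mx in ew2.
have -> : x = point_of d w by apply/esym/point_of_eq; rewrite ?rank_rV ?w0 ?ew.
have [b0|b0] := eqVneq (a2 0 0) 0.
  have a0 : a1 0 0 != 0.
    by apply: contraNneq w0 => a0; rewrite ew2 a0 b0 !scale0r addr0.
  by exists None; rewrite ?inE //= ew2 b0 scale0r addr0 point_of_scale.
exists (Some (a1 0 0 / a2 0 0)); rewrite ?inE //=.
rewrite -(point_of_scale _ _ (invr_neq0 b0)) ew2 scalerDr !scalerA mulVf //.
by rewrite scale1r addrC mulrC.
Qed.

End LineParametrization.

Lemma card_points_rank2 m (U : 'M[F]_(m, n.+1)) : \rank U = 2%N -> #|points U| = #|F|.+1.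
Proof.
move=> rU; have [d _] : exists d : point, (val d <= U)%MS by apply: ex_point_in; rewrite rU.
have : ~~ (U <= (0 : 'M[F]_(n.+1)))%MS by apply/negP => /mxrankS; rewrite mxrank0 rU.
case/row_subPn => i; have := row_sub i U; move: (row i U) => u su hi.
have u0 : u != 0 by apply: contraNneq hi => ->; rewrite sub0mx.
have : ~~ (U <= u)%MS by apply/negP => /mxrankS; rewrite rU rank_rV u0.
case/row_subPn => j; have := row_sub j U; move: (row j U) => v sv vu.
have v0 : v != 0 by apply: contraNneq vu => ->; rewrite sub0mx.
have -> : points U = points (u + v)%MS.
  apply/points_eqmx/eqmx_sym/eqmx_of_rank; first by rewrite addsmx_sub su.
  by rewrite rU rank_add_point ?rank_rV ?u0 ?v0.
rewrite (points_line_param d u0 vu) card_in_imset ?cardsT ?card_option //.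
by move=> o1 o2 _ _; apply: line_vector_inj.
Qed.

Lemma skew_point m1 m2 (W : 'M[F]_(m1, n.+1)) (L : 'M[F]_(m2, n.+1)) (y : point) :
  (W :&: L = 0)%MS -> (val y <= L)%MS -> ~~ (val y <= W)%MS.
Proof.
move=> WL0 yL; apply/negP => yW; have : (val y <= W :&: L)%MS by rewrite sub_capmx yW.
by rewrite WL0 => /mxrankS; rewrite mxrank0 point_rank.
Qed.

Lemma card_pencil m1 m2 (W : 'M[F]_(m1, n.+1)) (L : 'M[F]_(m2, n.+1)) (x : point) :
  (0 < n)%N -> \rank W = n.-1 -> \rank L = 2%N -> (W :&: L = 0)%MS ->
  #|[set y in points L | (val x <= W + val y)%MS]| =
    if (val x <= W)%MS then #|F|.+1 else 1%N.
Proof.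
move=> n0 rW rL WL0.
have LW := skew_point WL0.
have [xW|xW] := ifPn.
  suff -> : [set y in points L | (val x <= W + val y)%MS] = points L.
    exact: card_points_rank2.
  apply/setP => y; rewrite !inE.
  by rewrite (submx_trans xW) ?addsmxSl ?andbT.
have rWL : \rank (W + L)%MS = n.+1.
  by rewrite (mxrank_disjoint_sum WL0) rW rL addn2 prednK.
have rWxL : \rank ((W + val x) + L)%MS = n.+1.
  apply/eqP; rewrite eqn_leq rank_leq_col -[X in (X <= _)%N]rWL mxrankS //.
  by rewrite addsmx_sub addsmxSr (submx_trans (addsmxSl W (val x))) ?addsmxSl.
suff -> : [set y in points L | (val x <= W + val y)%MS] = points ((W + val x) :&: L)%MS.
  apply: card_points_rank1; rewrite rank_cap rWxL rank_add_point ?point_rank //.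
  by rewrite rW rL prednK // addn2 subSn // subnn.
apply/setP => y; rewrite !inE sub_capmx andbC.
by have [yL|] := boolP (val y <= L)%MS; rewrite ?andbF //= exchange_point ?LW // (negPf xW).
Qed.

Lemma coplanar_lines_meet (a b d e : point) m (S : 'M[F]_(m, n.+1)) :
  a != b -> d != e -> (\rank S <= 3)%N ->
  (val a + val b <= S)%MS -> (val d + val e <= S)%MS ->
  exists Q : point, (val Q <= val a + val b)%MS && (val Q <= val d + val e)%MS.
Proof.
move=> ab de rS abS deS.
have : (0 < \rank ((val a + val b) :&: (val d + val e)))%N.
  rewrite rank_cap !rank_line // subn_gt0 (leq_ltn_trans _ (_ : 3 < 4)%N) //.
  by apply: leq_trans rS; rewrite mxrankS // addsmx_sub abS.
by case/ex_point_in => Q; rewrite sub_capmx; exists Q.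
Qed.

Lemma cap_add_points m (A : 'M[F]_(m, n.+1)) (a b : point) :
  ~~ (val a <= A)%MS -> ~~ (val b <= A + val a)%MS -> ((A + val a) :&: (A + val b) :=: A)%MS.
Proof.
move=> aA bAa; have bA : ~~ (val b <= A)%MS.
  by apply: contra bAa => /submx_trans; apply; apply: addsmxSl.
apply/eqmx_sym/eqmx_of_rank; first by rewrite sub_capmx !addsmxSl.
have e : (A + val a + (A + val b) :=: A + val a + val b)%MS.
  apply: eqmx_of_rank.
    by rewrite addsmx_sub addsmxSl addsmxS ?addsmxSl.
  by rewrite mxrankS // addsmxS ?addsmxSr.
by rewrite rank_cap e !rank_add_point ?point_rank //; lia.
Qed.

Section CentralProjection.
Variable P : point.
Local Notation Pi := ((val P)^C)%MS.

Definition proj (x : point) : point := point_of P ((val P + val x) :&: Pi)%MS.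

Lemma rank_Pi : \rank Pi = n.
Proof. by rewrite mxrank_compl point_rank subSS subn0. Qed.

Lemma center_notin_Pi : ~~ (val P <= Pi)%MS.
Proof. by apply: skew_point (submx_refl _); rewrite capmxC capmx_compl. Qed.

Lemma Pi_point_neq (y : point) : (val y <= Pi)%MS -> ~~ (val y <= val P)%MS.
Proof. exact/skew_point/capmx_compl. Qed.

Lemma rank_add_Pi m (B : 'M[F]_(m, n.+1)) : (val P <= B)%MS -> \rank (B + Pi)%MS = n.+1.
Proof.
move=> PB; apply/eqP; rewrite eqn_leq rank_leq_col /=.
have := mxrank_disjoint_sum (capmx_compl (val P)); rewrite point_rank rank_Pi add1n => e.
rewrite -[X in (X <= _)%N]e mxrankS //.
by rewrite addsmx_sub addsmxSr (submx_trans PB) ?addsmxSl.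
Qed.

Lemma rank_line_cap_Pi (x : point) : x != P -> \rank ((val P + val x) :&: Pi)%MS = 1%N.
Proof.
move=> xP; rewrite rank_cap rank_line 1?eq_sym // rank_Pi rank_add_Pi ?addsmxSl //.
by rewrite add2n subSn // subnn.
Qed.

Lemma projE (x : point) : x != P -> (val (proj x) :=: (val P + val x) :&: Pi)%MS.
Proof. by move=> xP; apply/point_ofE/rank_line_cap_Pi. Qed.

Lemma proj_in_Pi (x : point) : x != P -> (val (proj x) <= Pi)%MS.
Proof. by move=> xP; rewrite projE // capmxSr. Qed.

Lemma proj_on_line (x : point) : x != P -> (val (proj x) <= val P + val x)%MS.
Proof. by move=> xP; rewrite projE // capmxSl. Qed.

Lemma on_proj_line (x : point) : x != P -> (val x <= val P + val (proj x))%MS.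
Proof.
by move=> xP; rewrite exchange_point ?Pi_point_neq ?proj_in_Pi ?proj_on_line ?orbT.
Qed.

Lemma proj_line (x : point) : x != P -> (val P + val (proj x) :=: val P + val x)%MS.
Proof.
move=> xP; apply: eqmx_of_rank; first by rewrite addsmx_sub addsmxSl proj_on_line.
by rewrite rank_line 1?eq_sym // rank_add_point ?point_rank ?Pi_point_neq ?proj_in_Pi.
Qed.

Lemma proj_uniq (x y : point) : x != P -> (val y <= Pi)%MS ->
  (val x <= val P + val y)%MS -> y = proj x.
Proof.
move=> xP yPi xy; apply: (point_rank1_uniq (rank_line_cap_Pi xP)); last by rewrite -projE.
rewrite sub_capmx yPi andbT; move: xy; rewrite exchange_point ?Pi_point_neq //.
by rewrite (negPf (point_neq_sub _)) // eq_sym.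
Qed.

Lemma proj_collinear (x1 x2 : point) : x1 != x2 -> x1 != P -> x2 != P ->
  (val P <= val x1 + val x2)%MS -> proj x2 = proj x1.
Proof.
move=> x12 x1P x2P Px12; apply: proj_uniq x1P (proj_in_Pi x2P) _.
rewrite (proj_line x2P) (line_eq (M := (val x1 + val x2)%MS)) ?addsmxSl ?addsmxSr //.
  by rewrite eq_sym.
by rewrite rank_line.
Qed.

Section ConeOverHyperplane.
Variables (m : nat) (H : 'M[F]_(m, n.+1)).
Hypotheses (rH : \rank H = n) (PiH : ~~ (Pi <= H)%MS).
Local Notation cone := ((H :&: Pi) + val P)%MS.

(* H :&: Pi has codimension 2, so its cone from P is a hyperplane. *)
Lemma rank_cap_Pi : \rank (H :&: Pi)%MS = n.-1.
Proof.
have rHPi : \rank (H + Pi)%MS = n.+1.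
  apply/eqP; rewrite eqn_leq rank_leq_col /= ltnNge; apply: contra PiH => le.
  by rewrite (eqmx_of_rank (addsmxSl H Pi)) ?addsmxSr // rH.
by rewrite rank_cap rH rank_Pi rHPi -[n.+1]addn1 subnDl subn1.
Qed.

Lemma rank_cone : \rank cone = n.
Proof.
have n0 : (0 < n)%N.
  rewrite lt0n -rank_Pi mxrank_eq0; apply: contra PiH => /eqP ->; exact: sub0mx.
have nPW : ~~ (val P <= H :&: Pi)%MS.
  by apply: contra center_notin_Pi => /submx_trans; apply; apply: capmxSr.
by rewrite rank_add_point ?point_rank // rank_cap_Pi prednK.
Qed.

(* By the modular law the cone meets Pi exactly in H :&: Pi. *)
Lemma cone_cap_Pi : (cone :&: Pi :=: H :&: Pi)%MS.
Proof.
apply: eqmx_trans (eqmx_sym (matrix_modl _ (capmxSr _ _))) _.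
by rewrite capmx_compl; apply: addsmx0.
Qed.

Lemma proj_in_cone (x : point) : x != P -> (val (proj x) <= H)%MS = (val x <= cone)%MS.
Proof.
move=> xP; apply/idP/idP => h.
  apply: submx_trans (on_proj_line xP) _; rewrite addsmx_sub addsmxSr /=.
  by apply: submx_trans (addsmxSl _ _); rewrite sub_capmx h proj_in_Pi.
have : (val (proj x) <= cone :&: Pi)%MS.
  rewrite sub_capmx proj_in_Pi // andbT; apply: submx_trans (proj_on_line xP) _.
  by rewrite addsmx_sub addsmxSr h.
by rewrite cone_cap_Pi => /submx_trans; apply; apply: capmxSl.
Qed.

End ConeOverHyperplane.
End CentralProjection.

End ProjectiveGeometry.

Section DualCode.
Variables (F : finFieldType) (n p : nat).
Hypotheses (Hp : prime p) (HpF : p \in [pchar F]).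
Local Notation point := (PGpoint F n).
Local Notation word := (word F n p).

(* q = #|F| is a power of p, hence q = 0 and q + 1 = 1 in F_p. *)
Lemma dvdn_char_card : (p %| #|F|)%N.
Proof.
have cardF : #|F| = #|pPrimeCharType HpF| by [].
have := card_pprimeChar HpF; rewrite -cardF; case: (logn _ _) => [|k] h.
  have : (1 < #|F|)%N by apply/card_gt1P; exists 0, 1; rewrite !inE eq_sym oner_neq0.
  by rewrite h.
by rewrite h expnS dvdn_mulr.
Qed.

Lemma natr_card : (#|F|%:R : 'F_p) = 0.
Proof. by apply/eqP; rewrite -(dvdn_pcharf (pchar_Fp Hp)) dvdn_char_card. Qed.

Lemma mulrn_card_line (a : 'F_p) : a *+ #|F|.+1 = a.
Proof. by rewrite mulrSr -mulr_natr natr_card mulr0 add0r. Qed.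

Lemma sum_const_set (a : 'F_p) (P : pred point) :
  \sum_(y | P y) a = a *+ #|[set y | P y]|.
Proof. by rewrite -sumr_const; apply: eq_bigl => y; rewrite inE. Qed.

Lemma inCperpP (c : word) :
  inCperp c <-> forall H : PGhyperplane F n, \sum_(x in points (val H)) c x = 0.
Proof.
have dot_incvec H : dotw c (incvec p H) = \sum_(x in points (val H)) c x.
  rewrite /dotw [RHS]big_mkcond; apply: eq_bigr => x _.
  by rewrite /incvec inE /incident; case: ifP; rewrite ?mulr1 ?mulr0.
split=> [hc H | h d [a ha]].
  rewrite -dot_incvec; apply: hc; exists (fun H' => (H' == H)%:R) => x.
  by rewrite (bigD1 H) //= eqxx mul1r big1 ?addr0 // => H' /negPf ->; rewrite mul0r.
rewrite /dotw; under eq_bigr do rewrite ha mulr_sumr.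
rewrite exchange_big /=; apply: big1 => H _.
transitivity (a H * dotw c (incvec p H)); last by rewrite dot_incvec h mulr0.
by rewrite /dotw mulr_sumr; apply: eq_bigr => x _; rewrite mulrCA.
Qed.

Lemma sum_hyperplane (c : word) m (A : 'M[F]_(m, n.+1)) :
  inCperp c -> \rank A = n -> \sum_(x in points A) c x = 0.
Proof. by move=> /inCperpP hc rA; rewrite -(points_eqmx (spanE rA)) hc. Qed.

(* The entries of a word of C^perp sum to zero: summing its hyperplane sums
   over a pencil counts every point 1 or q + 1 = 1 times. *)
Lemma sum_points (c : word) : inCperp c -> (0 < n)%N -> \sum_x c x = 0.
Proof.
move=> hc n0; pose L : 'M[F]_(n.+1) := pid_mx 2; pose W := (L^C)%MS.
have rL : \rank L = 2%N by rewrite rank_pid_mx.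
have rW : \rank W = n.-1 by rewrite mxrank_compl rL subSS subn1.
have WL0 : (W :&: L = 0)%MS by rewrite capmxC capmx_compl.
transitivity (\sum_(y in points L) \sum_(x in points (W + val y)%MS) c x); last first.
  apply: big1 => y; rewrite inE => yL; apply: sum_hyperplane => //.
  by rewrite rank_add_point ?point_rank ?(skew_point WL0) // rW prednK.
under [RHS]eq_bigr do rewrite big_mkcond /=.
rewrite [RHS]exchange_big /=; apply: eq_bigr => x _.
under eq_bigr do rewrite inE.
rewrite -big_mkcondr /= sum_const_set (card_pencil x n0 rW rL WL0).
by case: ifP => _; rewrite ?mulrn_card_line ?mulr1n.
Qed.

Lemma sum_nonzero (c : word) (A : {set point}) : \sum_(x in A) c x != 0 ->
  exists x, (x \in A) && (c x != 0).
Proof.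
move=> h; apply/existsP; apply: contraNT h => /existsPn hx.
by apply/eqP; apply: big1 => x xA; move: (hx x); rewrite xA /= negbK => /eqP.
Qed.

Definition indicator m (U : 'M[F]_(m, n.+1)) : word := fun x => ((val x <= U)%MS)%:R.

Lemma sum_indicator m (A : 'M[F]_(m, n.+1)) m' (U : 'M[F]_(m', n.+1)) :
  \sum_(x in points A) indicator U x = #|points (A :&: U)%MS|%:R.
Proof.
rewrite (eq_bigr (fun x => if (val x <= U)%MS then 1 else 0)); last first.
  by move=> x _; rewrite /indicator; case: ifP.
rewrite -big_mkcondr /= sum_const_set -pointsI; congr (_ *+ _).
by apply: eq_card => x; rewrite !inE.
Qed.

(* A hyperplane meets a line in 1 or q + 1 points, i.e. in 1 point mod p. *)
Lemma natr_card_hyperplane_line m (H : 'M[F]_(m, n.+1)) m' (L : 'M[F]_(m', n.+1)) :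
  \rank H = n -> \rank L = 2%N -> (#|points (H :&: L)%MS|%:R : 'F_p) = 1.
Proof.
move=> rH rL; have : (n <= \rank (H + L)%MS <= n.+1)%N.
  by rewrite rank_leq_col andbT -[X in (X <= _)%N]rH mxrankS ?addsmxSl.
case/andP; rewrite leq_eqVlt => /orP[/eqP e _|lt le].
  by rewrite card_points_rank2 ?mulrn_card_line // rank_cap -e rH rL addKn.
have e : \rank (H + L)%MS = n.+1 by apply/eqP; rewrite eqn_leq le lt.
by rewrite card_points_rank1 // rank_cap rH rL e addn2 subSn // subnn.
Qed.

Lemma line_difference_perp m1 m2 (L1 : 'M[F]_(m1, n.+1)) (L2 : 'M[F]_(m2, n.+1)) :
  \rank L1 = 2%N -> \rank L2 = 2%N -> inCperp (fun x => indicator L1 x - indicator L2 x).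
Proof.
move=> r1 r2; apply/inCperpP => H; have rH := PGsub_rank H.
by rewrite sumrB !sum_indicator !natr_card_hyperplane_line ?subrr.
Qed.

(* C^perp has a nonzero word of weight at most 2q: the difference of two
   lines through a common point. *)
Lemma small_weight_word : (1 < n)%N ->
  exists w : word, [/\ inCperp w, supp w != set0 & (wt w <= #|F| + #|F|)%N].
Proof.
move=> n1; have [r _] : exists r : point, ~~ (val r <= (0 : 'M[F]_(n.+1)))%MS.
  by apply: ex_point_outside; rewrite mxrank0.
have [a ar] : exists a : point, ~~ (val a <= val r)%MS.
  by apply: ex_point_outside; rewrite point_rank ltnS ltnW.
have ra : r != a by apply: contraNneq ar => ->.
have [b bL1] : exists b : point, ~~ (val b <= val r + val a)%MS.
  by apply: ex_point_outside; rewrite rank_line // ltnS.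
have rb : r != b by apply: contraNneq bL1 => <-; rewrite addsmxSl.
have line_minus_r (x : point) : r != x -> #|points (val r + val x)%MS :\ r| = #|F|.
  move=> rx; have := cardsD1 r (points (val r + val x)%MS).
  by rewrite inE addsmxSl card_points_rank2 ?rank_line // add1n => -[].
exists (fun x => indicator (val r + val a)%MS x - indicator (val r + val b)%MS x).
split; first exact: line_difference_perp (rank_line ra) (rank_line rb).
  apply/set0Pn; exists b; rewrite inE /indicator (negPf bL1) addsmxSr sub0r oppr_eq0.
  exact: oner_neq0.
apply: (@leq_trans #|(points (val r + val a)%MS :\ r) :|: (points (val r + val b)%MS :\ r)|).
  apply: subset_leq_card; apply/subsetP => x.
  rewrite !inE /indicator; have [->|xr] /= := eqVneq x r; first by rewrite !addsmxSl subrr eqxx.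
  by case: (val x <= _)%MS; case: (val x <= _)%MS; rewrite ?subrr ?eqxx.
by apply: leq_trans (leq_card_setU _ _) _; rewrite !line_minus_r.
Qed.

Section ProjectedWord.
Variables (c : word) (P : point).
Hypotheses (n0 : (0 < n)%N) (hc : inCperp c) (cP : c P = 0).
Local Notation Pi := ((val P)^C)%MS.

Definition proj_word : word := fun y =>
  if (val y <= Pi)%MS then \sum_(x in points (val P + val y)%MS) c x else 0.

Lemma sum_proj_word m (H : 'M[F]_(m, n.+1)) :
  \sum_(y in points H) proj_word y = \sum_(x | (val (proj P x) <= H)%MS) c x.
Proof.
transitivity (\sum_(y in points (H :&: Pi)%MS) \sum_(x in points (val P + val y)%MS) c x).
  rewrite [LHS]big_mkcond [RHS]big_mkcond; apply: eq_bigr => y _.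
  by rewrite /proj_word !inE sub_capmx; case: (val y <= H)%MS; case: (val y <= Pi)%MS.
under eq_bigr do rewrite big_mkcond /=.
rewrite exchange_big [RHS]big_mkcond /=; apply: eq_bigr => x _.
have [->|xP] := eqVneq x P; first by rewrite cP; case: ifP => _; apply: big1 => y _; case: ifP.
under eq_bigr do rewrite inE.
rewrite -big_mkcondr /= sum_const_set.
suff -> : [set y | (y \in points (H :&: Pi)%MS) && (val x <= val P + val y)%MS] =
          if (val (proj P x) <= H)%MS then [set proj P x] else set0.
  by case: ifP; rewrite ?cards1 ?cards0.
apply/setP => y; rewrite !inE sub_capmx; apply/idP/idP.
  by case/andP=> /andP[yH yPi] xy; rewrite -(proj_uniq xP yPi xy) yH inE.
by case: ifP; rewrite ?inE // => piH /eqP ->; rewrite piH proj_in_Pi // on_proj_line.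
Qed.

Lemma proj_word_perp : inCperp proj_word.
Proof.
apply/inCperpP => H; rewrite sum_proj_word.
have [PiH|PiH] := boolP (Pi <= val H)%MS.
  transitivity (\sum_x c x); last exact: sum_points hc n0.
  rewrite big_mkcond; apply: eq_bigr => x _.
  have [->|xP] := eqVneq x P; first by rewrite cP; case: ifP.
  by rewrite (submx_trans (proj_in_Pi xP) PiH).
have rH := PGsub_rank H.
transitivity (\sum_(x in points ((val H :&: Pi) + val P)%MS) c x).
  rewrite [LHS]big_mkcond [RHS]big_mkcond; apply: eq_bigr => x _.
  have [->|xP] := eqVneq x P; first by rewrite cP; case: ifP; case: ifP.
  by rewrite inE proj_in_cone.
exact: sum_hyperplane hc (rank_cone rH PiH).
Qed.

Lemma supp_proj_word : supp proj_word \subset proj P @: supp c.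
Proof.
apply/subsetP => y; rewrite inE /proj_word; case: ifP => yPi; last by rewrite eqxx.
case/sum_nonzero => x /andP[]; rewrite inE => xy cx.
apply/imsetP; exists x; first by rewrite inE.
by apply: (proj_uniq _ yPi xy); apply: contraNneq cx => ->; rewrite cP.
Qed.

Lemma proj_word_tangent (x0 : point) : c x0 != 0 ->
  (forall x, c x != 0 -> (val x <= val P + val x0)%MS -> x = x0) ->
  proj_word (proj P x0) != 0.
Proof.
move=> c0 tangent; have x0P : x0 != P by apply: contraNneq c0 => ->; rewrite cP.
rewrite /proj_word proj_in_Pi // (points_eqmx (proj_line x0P)).
rewrite (bigD1 x0) /=; last by rewrite inE addsmxSr.
rewrite big1 ?addr0 // => x /andP[]; rewrite inE => xl xx0.
by apply/eqP; apply: contraNT xx0 => cx; apply/eqP; exact: tangent.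
Qed.

End ProjectedWord.

Section MinimumWeight.
(* Throughout, c is a codeword of minimum weight of C^perp. A "hole" is a
   point outside the support of c. *)
Variable c : word.
Hypotheses (hm : min_weight_Cperp c) (n0 : (0 < n)%N).

Lemma weight_le_2q : (1 < n)%N -> (wt c <= #|F| + #|F|)%N.
Proof.
move=> n1; have [_ _ hmin] := hm; have [w [hw nzw ww]] := small_weight_word n1.
exact: leq_trans (hmin w hw nzw) ww.
Qed.

Lemma card_proj_supp_lt (P x1 x2 : point) : c P = 0 -> c x1 != 0 -> c x2 != 0 ->
  x1 != x2 -> (val P <= val x1 + val x2)%MS -> (#|proj P @: supp c| < #|supp c|)%N.
Proof.
move=> cP c1 c2 x12 P12; rewrite ltn_neqAle leq_imset_card andbT.
have neP (x : point) : c x != 0 -> x != P by apply: contraNneq => ->; rewrite cP.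
apply/imset_injP => inj; have /eqP := x12; apply; apply: inj; rewrite ?inE //.
by apply/esym/proj_collinear; rewrite ?(neP _ c1) ?(neP _ c2).
Qed.

(* Otherwise the
   projected word from P would be a nonzero word of C^perp of smaller
   weight. *)
Lemma hole_lines_secant (P x1 x2 : point) : c P = 0 -> c x1 != 0 -> c x2 != 0 ->
  x1 != x2 -> (val P <= val x1 + val x2)%MS ->
  forall x0 : point, c x0 != 0 ->
  exists2 x : point, (c x != 0) && (x != x0) & (val x <= val P + val x0)%MS.
Proof.
move=> cP c1 c2 x12 P12 x0 c0; have [hc _ hmin] := hm.
have [/existsP[x /and3P[cx xx0 xl]]|/existsPn tangent] :=
  boolP [exists x, [&& c x != 0, x != x0 & (val x <= val P + val x0)%MS]].
  by exists x; rewrite ?cx.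
have nz : supp (proj_word c P) != set0.
  apply/set0Pn; exists (proj P x0); rewrite inE; apply: proj_word_tangent => // x cx xl.
  by apply/eqP; apply: contraNT (tangent x) => xx0; rewrite cx xx0 xl.
have := hmin _ (proj_word_perp n0 hc cP) nz.
move/leq_trans/(_ (subset_leq_card (supp_proj_word cP))).
by rewrite leqNgt (card_proj_supp_lt cP c1 c2 x12 P12).
Qed.

Section HoleOnSecant.
Variables (P x y z : point).
Hypotheses (cP : c P = 0) (cx : c x != 0) (cy : c y != 0) (xy : x != y)
  (PL : (val P <= val x + val y)%MS) (cz : c z != 0) (zL : ~~ (val z <= val x + val y)%MS).
Local Notation L := (val x + val y)%MS.

Lemma rank_secant_plane : \rank (L + val z)%MS = 3%N.
Proof. by rewrite rank_add_point ?point_rank // rank_line. Qed.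

(* Every line joining x to a point w of the plane off L carries a second
   support point: otherwise the meet Q of xw with the line Pz would be a
   hole on the secant through z given by the key lemma, and the key lemma
   applied to Q would put a second support point on xw. *)
Lemma second_support_point (w : point) :
  (val w <= L + val z)%MS -> ~~ (val w <= L)%MS ->
  exists2 s : point, (c s != 0) && (s != x) & (val s <= val x + val w)%MS.
Proof.
move=> wS wL.
have [/existsP[s /and3P[cs sx sl]]|/existsPn tangent] :=
  boolP [exists s, [&& c s != 0, s != x & (val s <= val x + val w)%MS]].
  by exists s; rewrite ?cs.
have on_xw (s : point) : c s != 0 -> (val s <= val x + val w)%MS -> s = x.
  by move=> cs sl; apply/eqP; apply: contraNT (tangent s) => sx; rewrite cs sx sl.
have neP (s : point) : c s != 0 -> s != P by move=> cs; apply: contraNneq cs => ->; rewrite cP.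
have Pz : P != z by rewrite eq_sym neP.
have xw : x != w by apply: contraNneq wL => <-; rewrite addsmxSl.
have [Q /andP[QPz Qxw]] : exists Q : point,
    (val Q <= val P + val z)%MS && (val Q <= val x + val w)%MS.
  apply: (coplanar_lines_meet (S := (L + val z)%MS)) => //.
    by rewrite rank_secant_plane.
    by rewrite addsmx_sub addsmxSr (submx_trans PL) ?addsmxSl.
  by rewrite addsmx_sub wS (submx_trans (addsmxSl (val x) (val y))) ?addsmxSl.
have Qx : Q != x.
  apply: contraNneq zL => eQ; rewrite eQ in QPz.
  have e : (val P + val x :=: val P + val z)%MS.
    have Px : P != x by rewrite eq_sym neP.
    by apply: line_eq; rewrite ?addsmxSl ?rank_line.
  by apply: submx_trans (addsmxSr (val P) _) _; rewrite -e addsmx_sub PL addsmxSl.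
have cQ : c Q = 0 by apply/eqP; apply: contraNT Qx => cQ; apply/eqP; apply: on_xw.
have [s /andP[cs sz] sPz] := hole_lines_secant cP cx cy xy PL cz.
have zs : z != s by rewrite eq_sym.
have Qzs : (val Q <= val z + val s)%MS.
  by rewrite (line_eq zs (M := (val P + val z)%MS)) ?addsmxSr ?rank_line.
have [s' /andP[cs' s'x] s'Q] := hole_lines_secant cQ cz cs zs Qzs cx.
have := on_xw s' cs' (submx_trans s'Q _); rewrite addsmx_sub Qxw addsmxSl => /(_ isT).
by move/eqP; rewrite (negPf s'x).
Qed.

Definition second_point (w : point) : point :=
  odflt x [pick s | [&& c s != 0, s != x & (val s <= val x + val w)%MS]].

Lemma second_pointP (w : point) : (val w <= L + val z)%MS -> ~~ (val w <= L)%MS ->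
  [&& c (second_point w) != 0, second_point w != x &
      (val (second_point w) <= val x + val w)%MS].
Proof.
move=> wS wL; rewrite /second_point; case: pickP => [s //|none] /=.
have [s /andP[cs sx] sl] := second_support_point wS wL.
by move: (none s); rewrite cs sx sl.
Qed.

Lemma y_neq_z : y != z.
Proof. by apply: contraNneq zL => <-; rewrite addsmxSr. Qed.

(* x does not lie on the line yz, which would otherwise coincide with L. *)
Lemma x_off_yz : ~~ (val x <= val y + val z)%MS.
Proof.
apply: contra zL => xN; have e : (val y + val x :=: val y + val z)%MS.
  by apply: line_eq; rewrite ?addsmxSl ?rank_line ?y_neq_z // eq_sym.
by apply: submx_trans (addsmxSr (val y) _) _; rewrite -e addsmx_sub addsmxSl addsmxSr.
Qed.

Lemma line_yz_off_L (w : point) : w \in points (val y + val z)%MS :\ y ->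
  (val w <= L + val z)%MS && ~~ (val w <= L)%MS.
Proof.
rewrite !inE => /andP[wy wN].
have NS : (val y + val z <= L + val z)%MS.
  by rewrite addsmx_sub addsmxSr (submx_trans (addsmxSr (val x) (val y))) ?addsmxSl.
rewrite (submx_trans wN NS) /=; apply: contra wy => wL.
have rNL : \rank ((val y + val z) :&: L)%MS = 1%N.
  have e : (val y + val z + L :=: L + val z)%MS.
    apply: eqmx_of_rank; first by rewrite addsmx_sub NS addsmxSl.
    by rewrite mxrankS // addsmx_sub addsmxSr (submx_trans (addsmxSr (val y) (val z))) ?addsmxSl.
  by rewrite rank_cap e rank_secant_plane !rank_line ?y_neq_z.
apply/eqP/(point_rank1_uniq rNL); rewrite sub_capmx ?wN ?wL //.
by rewrite addsmxSl addsmxSr.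
Qed.

Lemma x_neq_line_yz (w : point) : w \in points (val y + val z)%MS :\ y -> x != w.
Proof. by move=> /line_yz_off_L /andP[_]; apply: contraNneq => <-; rewrite addsmxSl. Qed.

Lemma second_point_line (w : point) : w \in points (val y + val z)%MS :\ y ->
  (val x + val (second_point w) :=: val x + val w)%MS.
Proof.
move=> wD; have /andP[wS wL] := line_yz_off_L wD.
have /and3P[_ sx sl] := second_pointP wS wL.
by apply: line_eq; rewrite 1?eq_sym ?addsmxSl ?rank_line ?x_neq_line_yz.
Qed.

(* Distinct points of yz give distinct lines through x, hence distinct
   second points: a line through x meets yz only once. *)
Lemma second_point_inj : {in points (val y + val z)%MS :\ y &, injective second_point}.
Proof.
move=> w1 w2 w1D w2D e.
have [w1N w2N] : (val w1 <= val y + val z)%MS /\ (val w2 <= val y + val z)%MS.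
  by move: w1D w2D; rewrite !inE => /andP[_ ->] /andP[_ ->].
have w2l : (val w2 <= val x + val w1)%MS.
  by rewrite -(second_point_line w1D) e (second_point_line w2D) addsmxSr.
have e3 : (val x + val w1 + (val y + val z) :=: val y + val z + val x)%MS.
  apply: eqmx_of_rank.
    by rewrite addsmx_sub addsmxSl andbT addsmx_sub addsmxSr (submx_trans w1N) ?addsmxSl.
  rewrite mxrankS // addsmx_sub addsmxSr.
  by rewrite (submx_trans (addsmxSl (val x) (val w1))) ?addsmxSl.
have r1 : \rank ((val x + val w1) :&: (val y + val z))%MS = 1%N.
  rewrite rank_cap e3 (rank_add_point (point_rank x) x_off_yz).
  by rewrite !rank_line ?x_neq_line_yz ?y_neq_z.
by apply: (point_rank1_uniq r1); rewrite sub_capmx ?w1N ?w2N ?w2l ?addsmxSr.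
Qed.

(* The plane L + z contains at least q support points off L: the second
   points of the q points of yz other than y. *)
Lemma card_supp_plane_off_L :
  (#|F| <= #|[set s in supp c | (val s <= L + val z)%MS && ~~ (val s <= L)%MS]|)%N.
Proof.
have := cardsD1 y (points (val y + val z)%MS).
rewrite inE addsmxSl card_points_rank2 ?rank_line ?y_neq_z // add1n => -[->].
rewrite -(card_in_imset second_point_inj); apply/subset_leq_card/subsetP => s.
case/imsetP=> w wD ->; have /andP[wS wL] := line_yz_off_L wD.
have /and3P[cs sx sl] := second_pointP wS wL.
have xwS : (val x + val w <= L + val z)%MS.
  by rewrite addsmx_sub wS (submx_trans (addsmxSl (val x) (val y))) ?addsmxSl.
rewrite !inE cs (submx_trans sl xwS) /=; apply: contra wL => sL.
apply: submx_trans (addsmxSr (val x) _) _.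
by rewrite -(second_point_line wD) addsmx_sub addsmxSl.
Qed.

End HoleOnSecant.

Lemma two_support_points : exists x y : point, [/\ c x != 0, c y != 0 & x != y].
Proof.
have [hc nz _] := hm; have [x] := set0Pn _ nz; rewrite inE => cx.
have [/existsP[y /andP[cy yx]]|/existsPn single] := boolP [exists y, (c y != 0) && (y != x)].
  by exists x, y; split; rewrite // eq_sym.
have sum_x : \sum_y c y = c x.
  rewrite (bigD1 x) //= big1 ?addr0 // => y yx.
  by apply/eqP; move: (single y); rewrite yx andbT negbK.
by move: cx; rewrite -sum_x (sum_points hc n0) eqxx.
Qed.

Section PlaneWitness.
Hypothesis n1 : (1 < n)%N.

Lemma supp_in_line m (L : 'M[F]_(m, n.+1)) : \rank L = 2%N ->
  (forall x, c x != 0 -> (val x <= L)%MS) ->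
  exists pi : PGplane F n, forall x, x \in supp c -> incident x pi.
Proof.
move=> rL hL; have [pi Lpi] := ex_plane_through n1 rL.
by exists pi => x; rewrite inE /incident => cx; apply: submx_trans (hL x cx) Lpi.
Qed.

Lemma supp_in_plane m (S : 'M[F]_(m, n.+1)) : \rank S = 3%N ->
  (forall x, c x != 0 -> (val x <= S)%MS) ->
  exists pi : PGplane F n, forall x, x \in supp c -> incident x pi.
Proof.
by move=> rS hS; exists (span rS) => x; rewrite inE /incident spanE; apply: hS.
Qed.

(* If a hole lies on a secant line L, the support lies in a plane through L:
   two planes through L each carry at least q support points off L, which
   together with the two points on L exceed the weight bound 2q. *)
Lemma planar_with_hole (P x y : point) : c P = 0 -> c x != 0 -> c y != 0 -> x != y ->
  (val P <= val x + val y)%MS ->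
  exists pi : PGplane F n, forall x, x \in supp c -> incident x pi.
Proof.
move=> cP cx cy xy PL; set L := (val x + val y)%MS in PL *.
have [allL|/forallPn[z0]] := boolP [forall z, (c z != 0) ==> (val z <= L)%MS].
  by apply: (supp_in_line (rank_line xy)) => z; apply/implyP/(forallP allL).
rewrite negb_imply => /andP[cz0 z0L].
apply: (supp_in_plane (rank_secant_plane xy z0L)) => z cz.
apply/negPn/negP => zS; have zL : ~~ (val z <= L)%MS.
  by apply: contra zS => /submx_trans; apply; apply: addsmxSl.
pose T (z' : point) := [set s in supp c | (val s <= L + val z')%MS && ~~ (val s <= L)%MS].
have T0 : (#|F| <= #|T z0|)%N := card_supp_plane_off_L cP cx cy xy PL cz0 z0L.
have T1 : (#|F| <= #|T z|)%N := card_supp_plane_off_L cP cx cy xy PL cz zL.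
have dT : [disjoint T z0 & T z].
  apply/pred0P => s; rewrite /= !inE; apply/negP => /andP[/and3P[_ s0 sL] /and3P[_ s1 _]].
  by move: sL; rewrite -(cap_add_points z0L zS) sub_capmx s0 s1.
have dxy : [disjoint [set x; y] & T z0 :|: T z].
  by apply/pred0P => s; rewrite /= !inE; apply/negP => /andP[/orP[]/eqP-> /orP[]/and3P[_ _]];
    rewrite ?addsmxSl ?addsmxSr.
have : ([set x; y] :|: (T z0 :|: T z)) \subset supp c.
  by apply/subsetP => s; rewrite !inE => /orP[/orP[]/eqP->|/orP[]/and3P[]] //; rewrite inE.
move/subset_leq_card; rewrite cardsU (disjoint_setI0 dxy) cards0 subn0 cards2 xy.
rewrite cardsU (disjoint_setI0 dT) cards0 subn0 => /(leq_trans (leq_add (leqnn 2) (leq_add T0 T1))).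
by move/leq_trans/(_ (weight_le_2q n1)); rewrite add2n => /ltnW; rewrite ltnn.
Qed.

(* If no hole lies on a secant line, every secant line is contained in the
   support; two secant lines through a support point then already carry
   2q + 1 support points, so the support lies on a single line. *)
Lemma planar_without_hole :
  (forall P x y : point, c x != 0 -> c y != 0 -> x != y ->
     (val P <= val x + val y)%MS -> c P != 0) ->
  exists pi : PGplane F n, forall x, x \in supp c -> incident x pi.
Proof.
move=> no_hole; have [x [y [cx cy xy]]] := two_support_points.
set L := (val x + val y)%MS.
have [allL|/forallPn[z]] := boolP [forall z, (c z != 0) ==> (val z <= L)%MS].
  by apply: (supp_in_line (rank_line xy)) => z; apply/implyP/(forallP allL).
rewrite negb_imply => /andP[cz zL].
have xz : x != z by apply: contraNneq zL => <-; apply: addsmxSl.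
pose M := (val x + val z)%MS.
have LM : #|points L :&: points M| = 1%N.
  rewrite pointsI card_points_rank1 // rank_cap !rank_line //.
  suff -> : (L + M :=: L + val z)%MS by rewrite rank_add_point ?point_rank ?rank_line.
  apply: eqmx_of_rank; first by rewrite addsmx_sub addsmxSl addsmxS ?addsmxSl.
  by rewrite mxrankS // addsmxS ?addsmxSr.
have : points L :|: points M \subset supp c.
  by rewrite subUset; apply/andP; split; apply/subsetP => s; rewrite !inE; apply: no_hole.
move/subset_leq_card; rewrite cardsU LM !card_points_rank2 ?rank_line // addSn subn1 /= addnS.
by move/leq_trans/(_ (weight_le_2q n1)); rewrite ltnn.
Qed.

End PlaneWitness.

End MinimumWeight.
End DualCode.

Unset Implicit Arguments.

Theorem mainTheorem16 (F : finFieldType) (p : nat) (n : nat)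
  (Hp : prime p) (HpF : (p \in [pchar F])%R) (Hn : (3 <= n)%N)
  (c : word F n p) :
  min_weight_Cperp c ->
  exists pi : PGplane F n, forall x : PGpoint F n, x \in supp c -> incident x pi.
Proof.
move=> hm; have n1 : (1 < n)%N := ltnW Hn; have n0 : (0 < n)%N := ltnW n1.
have [/existsP[P /existsP[x /existsP[y /and5P[/eqP cP cx cy xy PL]]]]|/existsPn no_hole] :=
  boolP [exists P, exists x, exists y,
    [&& c P == 0, c x != 0, c y != 0, x != y & (val P <= val x + val y)%MS]].
  by apply: (planar_with_hole Hp HpF hm n0 n1 cP cx cy xy PL).
apply: (planar_without_hole Hp HpF hm n0 n1) => P x y cx cy xy PL; apply/negP => /eqP cP.
by move: (no_hole P) => /existsPn/(_ x)/existsPn/(_ y); rewrite cP eqxx cx cy xy PL.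
Qed.
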